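(* Let $\bar\rho>0$, $\bar\theta>0$, $R>0$, $c_v>0$, $\nu_0>0$, $k_0>0$ be constants, $b=\bar\theta/c_v$, and for $\xi\in\mathbb{R}$ let \[ A(\xi)=\begin{pmatrix}0&\bar\rho i\xi&0\\ \frac{R\bar\theta}{\bar\rho}i\xi&-\nu_0\xi^2&Ri\xi\\ 0&\frac{R\bar\theta}{c_v}i\xi&-k_0\xi^2\end{pmatrix}. \] Then for every $\xi\in\mathbb{R}$ all eigenvalues of $A(\xi)$ have non-positive real part. Moreover there exists $\xi_0=\xi_0(R,\bar\theta,\nu_0,k_0,b)>0$ such that for $|\xi|\ge\xi_0$ one can choose an eigenvalue $-\delta(\xi)$ of $A(\xi)$ satisfying \[ \lim_{|\xi|\to\infty}\delta(\xi)=\omega_0,\qquad \omega_0=\frac{R\bar\theta}{\nu_0}. \]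
   Context: $A(\xi)$ is the Fourier symbol of the adjoint of the one-dimensional compressible non-barotropic Navier–Stokes system linearized around $(\bar\rho,0,\bar\theta)$, with $\nu_0=(\lambda+2\mu)/\bar\rho$ and $k_0=\kappa/(\bar\rho c_v)$. *)

From HB Require Import structures.
From mathcomp Require Import all_boot all_order all_algebra.
From mathcomp Require Import reals complex.
Set Implicit Arguments. Unset Strict Implicit. Unset Printing Implicit Defensive.
Import Order.TTheory GRing.Theory Num.Theory.
Local Open Scope ring_scope.
Local Open Scope complex_scope.

(* Parameters: rho = \bar\rho, theta = \bar\theta, Rg = R (gas constant),
   cv = c_v, nu0, k0. *)
Definition Amat (R : realType) (rho theta Rg cv nu0 k0 xi : R)
  : 'M[R[i]]_3 :=
  let ixi : R[i] := (0 +i* xi) in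
  \matrix_(j < 3, k < 3)
    match nat_of_ord j, nat_of_ord k with
    | 0, 1 => rho%:C * ixi
    | 1, 0 => (Rg * theta / rho)%:C * ixi
    | 1, 1 => (- (nu0 * xi ^+ 2))%:C
    | 1, 2 => Rg%:C * ixi
    | 2, 1 => (Rg * theta / cv)%:C * ixi
    | 2, 2 => (- (k0 * xi ^+ 2))%:C
    | _, _ => 0
    end.

From HB Require Import structures.
From mathcomp Require Import all_boot all_order all_algebra.
From mathcomp Require Import reals complex.
From mathcomp Require Import ring lra.
From Stdlib Require Import ClassicalEpsilon.
Import Order.TTheory GRing.Theory Num.Theory.
Local Open Scope ring_scope.
Local Open Scope complex_scope.

(* Energy estimate: for a left eigenvector v of A(xi) (MathComp's [eigenvalue]
   uses row vectors) with eigenvalue s + i t, the weighted energy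
   S = rho R |v0|^2 + c1 R |v1|^2 + c1 c2 |v2|^2, where c1 = R theta/rho and
   c2 = R theta/c_v, satisfies s S = - xi^2 (c1 R nu0 |v1|^2 + c1 c2 k0 |v2|^2):
   the weights make the first-order coupling skew-adjoint, so only the
   diffusion dissipates and s <= 0.
   Large frequencies: -d is an eigenvalue as soon as d solves the dispersion
   relation F(xi^2, d) = 0, where F(X, d) = det(-d - A(xi)) is a cubic in d.
   For large X = xi^2 it changes sign on [0, 2 om0], and at a root the
   identity nu0 k0 X^2 (om0 - d) = X P(d) + d^3, with P bounded on
   [0, 2 om0], gives |d - om0| = O(1/X). *)

Lemma mulmx_row3 (F : pzRingType) (v : 'rV[F]_3) (A : 'M[F]_3) j :
  (v *m A) 0 j = v 0 0 * A 0 j + v 0 1 * A 1 j + v 0 2%:R * A 2%:R j.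
Proof.
rewrite mxE !big_ord_recr big_ord0 /= add0r.
by congr (v 0 _ * A _ j + v 0 _ * A _ j + v 0 _ * A _ j); apply: val_inj.
Qed.

Lemma row3P (T : Type) (u w : 'rV[T]_3) :
  u = w <-> [/\ u 0 0 = w 0 0, u 0 1 = w 0 1 & u 0 2%:R = w 0 2%:R].
Proof.
split=> [-> // | [e0 e1 e2]]; apply/rowP; case=> -[|[|[|//]]] j_lt.
- by rewrite (_ : Ordinal j_lt = 0) //; apply: val_inj.
- by rewrite (_ : Ordinal j_lt = 1) //; apply: val_inj.
- by rewrite (_ : Ordinal j_lt = 2%:R) //; apply: val_inj.
Qed.

Lemma complex_eq0 (R : realDomainType) (a b : R) :
  (a +i* b == 0) = (a ^+ 2 + b ^+ 2 == 0).
Proof. by rewrite paddr_eq0 ?sqr_ge0 // !sqrf_eq0 eq_complex. Qed.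

Lemma normc_real (R : rcfType) (a : R) : `|a%:C| = `|a|%:C.
Proof. by rewrite normc_def /= expr0n /= addr0 sqrtr_sqr. Qed.

(* [dispersion_cubic nu k om D X d] is det(-d - A(xi)) for X = xi^2,
   om = R theta/nu0 and D = R (R theta/c_v). *)
Definition dispersion_cubic {R : pzRingType} (nu k om D X d : R) : R :=
  nu * om * X * (k * X - d) - d * (nu * X - d) * (k * X - d) - D * X * d.

Section DispersionCubic.
Context {R : rcfType} {nu k om D : R}.
Hypotheses (nu_gt0 : 0 < nu) (k_gt0 : 0 < k) (om_gt0 : 0 < om) (D_gt0 : 0 < D).

Let om2_ge0 : 0 <= 2 * om. Proof. by rewrite mulr_ge0 // ltW. Qed.

Lemma dispersion_cubic_root {X : R} : 2 * om < k * X -> 4 * om < nu * X ->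
  exists2 d, 0 < d <= 2 * om & dispersion_cubic nu k om D X d = 0.
Proof.
move=> kX_gt nuX_gt.
have X_gt0 : 0 < X by rewrite -(pmulr_rgt0 X nu_gt0) (lt_trans _ nuX_gt) ?mulr_gt0.
pose p : {poly R} := - ((nu * om * X)%:P * ((k * X)%:P - 'X)
  - 'X * ((nu * X)%:P - 'X) * ((k * X)%:P - 'X) - (D * X)%:P * 'X).
have pE d : p.[d] = - dispersion_cubic nu k om D X d by rewrite !hornerE.
have F0 : dispersion_cubic nu k om D X 0 = nu * om * k * X ^+ 2.
  by rewrite /dispersion_cubic; ring.
have F0_gt0 : 0 < nu * om * k * X ^+ 2 by rewrite !mulr_gt0 // exprn_gt0.
(* the hypotheses on X are exactly what makes both factors positive *)
have F2 : dispersion_cubic nu k om D X (2 * om)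
    = - om * (k * X - 2 * om) * (nu * X - 4 * om) - 2 * D * X * om.
  by rewrite /dispersion_cubic; ring.
have F2_lt0 : dispersion_cubic nu k om D X (2 * om) < 0.
  rewrite F2; have : 0 < om * (k * X - 2 * om) * (nu * X - 4 * om).
    by rewrite !mulr_gt0 // subr_gt0.
  have : 0 < D * X * om by rewrite !mulr_gt0.
  lra.
have sign_change : p.[0] <= 0 <= p.[2 * om].
  by rewrite !pE F0 oppr_le0 oppr_ge0 (ltW F0_gt0) (ltW F2_lt0).
have [d /andP[d_ge0 d_le] /rootP] := poly_ivt om2_ge0 sign_change.
rewrite pE => /eqP; rewrite oppr_eq0 => /eqP root_d.
exists d => //; rewrite d_le andbT lt_def d_ge0 andbT.
by apply: contraPneq root_d => ->; rewrite F0 => /eqP; rewrite gt_eqF.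
Qed.

Lemma dispersion_cubic_root_near : exists K, forall X d, 1 <= X ->
  0 <= d <= 2 * om -> dispersion_cubic nu k om D X d = 0 ->
  nu * k * X * `|d - om| <= K.
Proof.
pose a := nu * om + D; pose b := nu + k.
have a_ge0 : 0 <= a by rewrite addr_ge0 // ?mulr_ge0 // ltW.
have b_ge0 : 0 <= b by rewrite addr_ge0 // ltW.
exists (a * (2 * om) + b * (2 * om) ^+ 2 + (2 * om) ^+ 3).
move=> X d X_ge1 /andP[d_ge0 d_le] root_d.
have X_gt0 : 0 < X by lra.
have root_identity :
    nu * k * X ^+ 2 * (om - d) = X * (a * d - b * d ^+ 2) + d ^+ 3.
  by apply/eqP; rewrite -subr_eq0 -root_d /dispersion_cubic /a /b; apply/eqP; ring.
have P_le : `|a * d - b * d ^+ 2| <= a * (2 * om) + b * (2 * om) ^+ 2.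
  apply: le_trans (ler_normB _ _) _.
  rewrite !normrM (ger0_norm a_ge0) (ger0_norm b_ge0) (ger0_norm d_ge0).
  by rewrite lerD // ler_wpM2l // -expr2 ler_pXn2r.
have d3_le : d ^+ 3 <= X * (2 * om) ^+ 3.
  apply: le_trans (_ : _ <= (2 * om) ^+ 3) _; first by rewrite ler_pXn2r ?nnegrE.
  by rewrite ler_peMl ?exprn_ge0.
have nkX2_ge0 : 0 <= nu * k * X ^+ 2 by rewrite !mulr_ge0 ?sqr_ge0 // ltW.
rewrite -(ler_pM2l X_gt0) mulrDr.
have -> : X * (nu * k * X * `|d - om|) = `|nu * k * X ^+ 2 * (om - d)|.
  by rewrite normrM (ger0_norm nkX2_ge0) distrC; ring.
rewrite root_identity; apply: le_trans (ler_normD _ _) _.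
by rewrite normrM (gtr0_norm X_gt0) (ger0_norm (exprn_ge0 _ d_ge0)) lerD // ler_pM2l.
Qed.

End DispersionCubic.

Section Symbol.
Context {R : realType} {rho theta Rg cv nu0 k0 : R}.
Hypotheses (rho_gt0 : 0 < rho) (theta_gt0 : 0 < theta) (Rg_gt0 : 0 < Rg)
  (cv_gt0 : 0 < cv) (nu0_gt0 : 0 < nu0) (k0_gt0 : 0 < k0).

Local Notation A := (Amat rho theta Rg cv nu0 k0).
Local Notation c1 := (Rg * theta / rho).
Local Notation c2 := (Rg * theta / cv).
Local Notation om := (Rg * theta / nu0).

Lemma Amat_left_eigenP {xi : R} {v : 'rV[R[i]]_3} {a0 b0 a1 b1 a2 b2 s t : R} :
  v 0 0 = a0 +i* b0 -> v 0 1 = a1 +i* b1 -> v 0 2%:R = a2 +i* b2 ->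
  v *m A xi = (s +i* t) *: v <->
  [/\ - c1 * xi * b1 = s * a0 - t * b0 /\ c1 * xi * a1 = s * b0 + t * a0,
      - rho * xi * b0 - nu0 * xi ^+ 2 * a1 - c2 * xi * b2 = s * a1 - t * b1 /\
      rho * xi * a0 - nu0 * xi ^+ 2 * b1 + c2 * xi * a2 = s * b1 + t * a1
    & - Rg * xi * b1 - k0 * xi ^+ 2 * a2 = s * a2 - t * b2 /\
      Rg * xi * a1 - k0 * xi ^+ 2 * b2 = s * b2 + t * a2].
Proof.
move=> v0 v1 v2; rewrite row3P !mulmx_row3 !mxE /= v0 v1 v2 /real_complex_def.
simpc; split.
  by case=> -[e0r e0i] [e1r e1i] [e2r e2i]; split; split; lra.
by case=> -[? ?] [? ?] [? ?]; split; congr (_ +i* _); lra.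
Qed.

Lemma Amat_left_eigen_energy {xi : R} {v : 'rV[R[i]]_3} {a0 b0 a1 b1 a2 b2 s t : R} :
  v 0 0 = a0 +i* b0 -> v 0 1 = a1 +i* b1 -> v 0 2%:R = a2 +i* b2 ->
  v *m A xi = (s +i* t) *: v ->
  s * (rho * Rg * (a0 ^+ 2 + b0 ^+ 2) + c1 * Rg * (a1 ^+ 2 + b1 ^+ 2)
       + c1 * c2 * (a2 ^+ 2 + b2 ^+ 2))
  = - xi ^+ 2 * (c1 * Rg * nu0 * (a1 ^+ 2 + b1 ^+ 2)
                 + c1 * c2 * k0 * (a2 ^+ 2 + b2 ^+ 2)).
Proof.
move=> v0 v1 v2 /(Amat_left_eigenP v0 v1 v2).
case=> -[e0r e0i] [e1r e1i] [e2r e2i].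
transitivity (rho * Rg * (a0 * (s * a0 - t * b0) + b0 * (s * b0 + t * a0))
  + c1 * Rg * (a1 * (s * a1 - t * b1) + b1 * (s * b1 + t * a1))
  + c1 * c2 * (a2 * (s * a2 - t * b2) + b2 * (s * b2 + t * a2))); first ring.
by rewrite -e0r -e0i -e1r -e1i -e2r -e2i; ring.
Qed.

Lemma Amat_eigenvalue_Re_le0 xi lam : eigenvalue (A xi) lam -> 'Re lam <= 0.
Proof.
case/eigenvalueP=> v; case: lam => s t eigen_v v_neq0.
case E0: (v 0 0) => [a0 b0]; case E1: (v 0 1) => [a1 b1].
case E2: (v 0 2%:R) => [a2 b2].
have energy := Amat_left_eigen_energy E0 E1 E2 eigen_v.
rewrite -complexRe lecR /=.
have c1_gt0 : 0 < c1 by rewrite !mulr_gt0 ?invr_gt0.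
have c2_gt0 : 0 < c2 by rewrite !mulr_gt0 ?invr_gt0.
set n0 := a0 ^+ 2 + b0 ^+ 2 in energy; set n1 := a1 ^+ 2 + b1 ^+ 2 in energy.
set n2 := a2 ^+ 2 + b2 ^+ 2 in energy.
have n_ge0 (a b : R) : 0 <= a ^+ 2 + b ^+ 2 by rewrite addr_ge0 ?sqr_ge0.
have w0_gt0 : 0 < rho * Rg by rewrite mulr_gt0.
have w1_gt0 : 0 < c1 * Rg by rewrite mulr_gt0.
have w2_gt0 : 0 < c1 * c2 by rewrite mulr_gt0.
have T_ge0 w n : 0 < w -> 0 <= n -> 0 <= w * n by move=> /ltW; apply: mulr_ge0.
have S_gt0 : 0 < rho * Rg * n0 + c1 * Rg * n1 + c1 * c2 * n2.
  rewrite lt_def !addr_ge0 ?T_ge0 ?n_ge0 // andbT.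
  apply: contraNneq v_neq0 => /eqP.
  rewrite !paddr_eq0 ?addr_ge0 ?T_ge0 ?n_ge0 // (mulf_eq0 (rho * Rg)).
  rewrite (mulf_eq0 (c1 * Rg)) (mulf_eq0 (c1 * c2)) (gt_eqF w0_gt0).
  rewrite (gt_eqF w1_gt0) (gt_eqF w2_gt0) /= -!complex_eq0.
  rewrite -E0 -E1 -E2 => /andP[/andP[/eqP z0 /eqP z1] /eqP z2].
  by apply/eqP/row3P; rewrite !mxE.
have diss_ge0 : 0 <= c1 * Rg * nu0 * n1 + c1 * c2 * k0 * n2.
  by rewrite addr_ge0 // T_ge0 ?n_ge0 // mulr_gt0.
rewrite leNgt; apply/negP => s_gt0.
have := mulr_gt0 s_gt0 S_gt0; rewrite energy.
have := mulr_ge0 (sqr_ge0 xi) diss_ge0; lra.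
Qed.

Lemma Amat_eigenvalue_cubic_root xi d : xi != 0 -> d != 0 ->
  dispersion_cubic nu0 k0 om (Rg * c2) (xi ^+ 2) d = 0 ->
  eigenvalue (A xi) (- d%:C).
Proof.
move=> xi_neq0 d_neq0 root_d.
(* the eigenvector is read off the first and last rows of A(xi) + d *)
set b0 := c1 * xi * (k0 * xi ^+ 2 - d); set a1 := - d * (k0 * xi ^+ 2 - d).
set b2 := - Rg * xi * d.
set v : 'rV[R[i]]_3 := \row_j [:: 0 +i* b0; a1 +i* 0; 0 +i* b2]`_j.
have E0 : v 0 0 = 0 +i* b0 by rewrite mxE.
have E1 : v 0 1 = a1 +i* 0 by rewrite mxE.
have E2 : v 0 2%:R = 0 +i* b2 by rewrite mxE.
apply/eigenvalueP; exists v.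
  rewrite (_ : - d%:C = (- d) +i* 0); last by rewrite /real_complex_def; simpc.
  apply/(Amat_left_eigenP E0 E1 E2); rewrite /b0 /a1 /b2.
  split; split; try ring.
  apply/eqP; rewrite -subr_eq0; apply/eqP.
  transitivity (- dispersion_cubic nu0 k0 om (Rg * c2) (xi ^+ 2) d).
    by rewrite /dispersion_cubic; field; rewrite !gt_eqF.
  by rewrite root_d oppr0.
have b2_neq0 : b2 != 0 by rewrite !mulf_neq0 // oppr_eq0 gt_eqF.
apply: contraNneq b2_neq0 => /row3P[_ _].
by rewrite E2 mxE => /(congr1 (@complex.Im R)) /= ->.
Qed.

Lemma Amat_eigenvalue_near_om : exists2 xi0, 1 <= xi0 & exists K,
  forall xi, xi0 <= `|xi| -> exists d,
    eigenvalue (A xi) (- d%:C) /\ nu0 * k0 * `|xi| * `|d - om| <= K.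
Proof.
have om_gt0 : 0 < om by rewrite !mulr_gt0 ?invr_gt0.
have D_gt0 : 0 < Rg * c2 by rewrite !mulr_gt0 ?invr_gt0.
have [K near] := dispersion_cubic_root_near nu0_gt0 k0_gt0 om_gt0 D_gt0.
have q1_ge0 : 0 <= 2 * om / k0 by rewrite ltW // !mulr_gt0 ?invr_gt0.
have q2_ge0 : 0 <= 4 * om / nu0 by rewrite ltW // !mulr_gt0 ?invr_gt0.
exists (1 + 2 * om / k0 + 4 * om / nu0); first lra.
exists K => xi le_xi.
have xi_ge1 : 1 <= `|xi| by lra.
have xi_le_sqr : `|xi| <= xi ^+ 2 by rewrite -real_normK ?num_real // ler_peMr.
have kX_gt : 2 * om < k0 * xi ^+ 2.
  by rewrite -ltr_pdivrMl //; lra.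
have nuX_gt : 4 * om < nu0 * xi ^+ 2.
  by rewrite -ltr_pdivrMl //; lra.
have [d /andP[d_gt0 d_le] root_d] :=
  dispersion_cubic_root nu0_gt0 k0_gt0 om_gt0 D_gt0 kX_gt nuX_gt.
exists d; split.
  by apply: Amat_eigenvalue_cubic_root => //; [rewrite -normr_gt0 | rewrite gt_eqF]; lra.
have d_in : 0 <= d <= 2 * om by rewrite ltW.
apply: le_trans (near _ _ (le_trans xi_ge1 xi_le_sqr) d_in root_d).
by rewrite ler_wpM2r ?normr_ge0 // ler_wpM2l // ltW // mulr_gt0.
Qed.

End Symbol.

Lemma Oinv_cvg_at_infty {R : realFieldType} {f : R -> R} {l a K x0 : R} :
  0 < a -> 0 < x0 -> (forall x, x0 <= `|x| -> a * `|x| * `|f x - l| <= K) ->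
  forall eps, 0 < eps -> exists M, forall x, M <= `|x| -> `|f x - l| < eps.
Proof.
move=> a_gt0 x0_gt0 rate eps eps_gt0.
have ae_gt0 : 0 < a * eps by rewrite mulr_gt0.
have K_ge0 : 0 <= `|K| / (a * eps) by rewrite divr_ge0 ?normr_ge0 ?ltW.
exists (x0 + `|K| / (a * eps)) => x le_x.
have x_gt0 : 0 < `|x| by lra.
rewrite -(ltr_pM2l (mulr_gt0 a_gt0 x_gt0)).
apply: le_lt_trans (rate _ (le_trans (ler_wpDr K_ge0 (lexx _)) le_x)) _.
apply: le_lt_trans (ler_norm K) _.
rewrite (_ : _ * eps = `|x| * (a * eps)); last by ring.
by rewrite -ltr_pdivrMr //; lra.
Qed.

Theorem lemma2p5 (R : realType) (rho theta Rg cv nu0 k0 : R) :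
  0 < rho -> 0 < theta -> 0 < Rg -> 0 < cv -> 0 < nu0 -> 0 < k0 ->
  (forall (xi : R) (lam : R[i]),
      eigenvalue (Amat rho theta Rg cv nu0 k0 xi) lam -> Re lam <= 0) /\
  (exists xi0 : R, 0 < xi0 /\
     exists delta : R -> R[i],
       (forall xi : R, xi0 <= `|xi| ->
          eigenvalue (Amat rho theta Rg cv nu0 k0 xi) (- delta xi)) /\
       (forall eps : R, 0 < eps -> exists M : R, forall xi : R,
          M <= `|xi| -> `|delta xi - (Rg * theta / nu0)%:C| < eps%:C)).
Proof.
move=> rho_gt0 theta_gt0 Rg_gt0 cv_gt0 nu0_gt0 k0_gt0.
split=> [xi lam|]; first exact: Amat_eigenvalue_Re_le0.
have [xi0 xi0_ge1 [K near]] :=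
  Amat_eigenvalue_near_om rho_gt0 theta_gt0 Rg_gt0 cv_gt0 nu0_gt0 k0_gt0.
have /choice[d dP] : forall xi, exists d, xi0 <= `|xi| ->
    eigenvalue (Amat rho theta Rg cv nu0 k0 xi) (- d%:C) /\
    nu0 * k0 * `|xi| * `|d - Rg * theta / nu0| <= K.
  move=> xi; have [/near[d ?]|_] := lerP xi0 `|xi|; first by exists d.
  by exists 0.
have nk_gt0 : 0 < nu0 * k0 by rewrite mulr_gt0.
have rate xi : xi0 <= `|xi| -> nu0 * k0 * `|xi| * `|d xi - Rg * theta / nu0| <= K.
  by move/dP=> [].
have xi0_gt0 : 0 < xi0 by lra.
exists xi0; split=> //.
exists (fun xi => (d xi)%:C); split=> [xi /dP[] // | eps eps_gt0].
have [M near_om] := Oinv_cvg_at_infty nk_gt0 xi0_gt0 rate _ eps_gt0.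
by exists M => xi /near_om; rewrite -raddfB normc_real ltcR.
Qed.
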